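(* Let $(\lambda,\omega)$ be a stable Hamiltonian structure on a closed 3-manifold $M$, with integrable region $U=U_1\sqcup\dots\sqcup U_k$ as in the structure theorem. Then there exist arbitrarily $C^\infty$-small perturbations of $(\lambda,\omega)$, compactly supported in the interior of $U$ and $T^2$-invariant on each $U_i$, yielding a stable Hamiltonian structure $(\tilde\lambda,\tilde\omega)$ such that the slope of $\ker\tilde\omega$ (equivalently of its Reeb vector field) is non-constant on each connected component $U_i$.
   Context: A stable Hamiltonian structure (SHS) on an oriented 3-manifold $M$ is a pair $(\lambda,\omega)$ with $\lambda\wedge\omega>0$, $d\omega=0$, $\ker\omega\subset\ker d\lambda$; its Reeb vector field $X$ satisfies $\lambda(X)=1$, $\iota_X\omega=0$. Structure theorem (Cieliebak–Volkov): there exist a compact $X$-invariant 3-submanifold $N$, a disjoint union $U=U_1\sqcup\dots\sqcup U_k$ of compact regions $U_i\cong T^2\times[0,1]$ with $N\cap U=\partial N\cap\partial U$, $N\cup U=M$, such that (among other properties) on each $U_i$ the SHS is $T^2$-invariant: in coordinates $(x,y,t)$ one has $\lambda=g_1(t)dx+g_2(t)dy+g_3(t)dt$ and $\omega=h_1(t)dt\wedge dx+h_2(t)dt\wedge dy$. The slope of $\ker\omega$ on $T^2\times\{t\}$ is the slope of the linear vector field $h_1(t)\partial_x+h_2(t)\partial_y$ spanning $\ker\omega$ there. *)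

From Stdlib Require Import Reals.
From Coquelicot Require Import Coquelicot.
Open Scope R_scope.

(* A T^2-invariant pair (lambda, omega) on T^2 x [0,1] with coordinates (x,y,t):
     lambda = g1(t) dx + g2(t) dy + g3(t) dt
     omega  = h1(t) dt/\dx + h2(t) dt/\dy + h3(t) dx/\dy
   (the most general T^2-invariant 1-form and 2-form).  The coefficient
   functions are given on all of R (every smooth function on [0,1] extends). *)
Record T2form := mkT2 {
  g1 : R -> R; g2 : R -> R; g3 : R -> R;
  h1 : R -> R; h2 : R -> R; h3 : R -> R }.

Definition vec := (R * R * R)%type.
Definition cx (v : vec) : R := fst (fst v).
Definition cy (v : vec) : R := snd (fst v).
Definition ct (v : vec) : R := snd v.

Definition wedge11 (a b : vec -> R) (v w : vec) : R := a v * b w - a w * b v.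

Definition smooth (f : R -> R) : Prop := forall n x, ex_derive_n f n x.

Definition T2_smooth (F : T2form) : Prop :=
  smooth (g1 F) /\ smooth (g2 F) /\ smooth (g3 F) /\
  smooth (h1 F) /\ smooth (h2 F) /\ smooth (h3 F).

Definition lam (F : T2form) (t : R) (v : vec) : R :=
  g1 F t * cx v + g2 F t * cy v + g3 F t * ct v.

Definition om (F : T2form) (t : R) (v w : vec) : R :=
  h1 F t * wedge11 ct cx v w + h2 F t * wedge11 ct cy v w
  + h3 F t * wedge11 cx cy v w.

Definition dlam (F : T2form) (t : R) (v w : vec) : R :=
  Derive (g1 F) t * wedge11 ct cx v w + Derive (g2 F) t * wedge11 ct cy v w.

(* d omega = h3'(t) dt/\dx/\dy ; its coefficient: *)
Definition dom_coef (F : T2form) (t : R) : R := Derive (h3 F) t.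

Definition ex : vec := (1, 0, 0). Definition ey : vec := (0, 1, 0).
Definition et : vec := (0, 0, 1).

Definition lam_wedge_om (F : T2form) (t : R) (u v w : vec) : R :=
  lam F t u * om F t v w - lam F t v * om F t u w + lam F t w * om F t u v.

Definition SHS_on_U (F : T2form) : Prop :=
  T2_smooth F /\
  forall t, 0 <= t <= 1 ->
    lam_wedge_om F t ex ey et > 0 /\
    dom_coef F t = 0 /\
    (forall v : vec, (forall w, om F t v w = 0) -> forall w, dlam F t v w = 0).

Definition Ck_close (k : nat) (eps : R) (f f' : R -> R) : Prop :=
  forall j t, (j <= k)%nat -> 0 <= t <= 1 ->
    Rabs (Derive_n (fun s => f' s - f s) j t) < eps.

Definition T2_Ck_close (k : nat) (eps : R) (F F' : T2form) : Prop :=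
  Ck_close k eps (g1 F) (g1 F') /\ Ck_close k eps (g2 F) (g2 F') /\
  Ck_close k eps (g3 F) (g3 F') /\ Ck_close k eps (h1 F) (h1 F') /\
  Ck_close k eps (h2 F) (h2 F') /\ Ck_close k eps (h3 F) (h3 F').

Definition supp_in_interior (F F' : T2form) : Prop :=
  exists a b, 0 < a /\ a < b /\ b < 1 /\
    forall t, (t < a \/ b < t) ->
      g1 F' t = g1 F t /\ g2 F' t = g2 F t /\ g3 F' t = g3 F t /\
      h1 F' t = h1 F t /\ h2 F' t = h2 F t /\ h3 F' t = h3 F t.

(* The slope of ker omega on T^2 x {t} is that of h1(t) d/dx + h2(t) d/dy,
   a point of RP^1 = [h1(t) : h2(t)].  Non-constant slope on [0,1]: *)
Definition slope_nonconstant (F : T2form) : Prop :=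
  exists t s, 0 <= t <= 1 /\ 0 <= s <= 1 /\
    h1 F t * h2 F s - h2 F t * h1 F s <> 0.

From Stdlib Require Import Reals Lra Lia List Classical IndefiniteDescription.
From Coquelicot Require Import Coquelicot.
Open Scope R_scope.

(* If the slope of [ker omega] is already non-constant there is nothing to do.
   Otherwise [h(t) = (h1, h2)(t)] stays parallel to [u = h(0)], and by the kernel
   condition so does [g'(t)].  Push [(g1, g2)] by [e P] and [(h1, h2)] by [e Q] in the
   direction orthogonal to [u]: [lambda /\ omega] moves by [O(e)], and the kernel
   condition survives exactly when [P' (u.h) = Q (u.g')], e.g. for [Q = (u.h) sigma],
   [P' = (u.g') sigma].  Such [sigma] and [P], both supported in [(0,1)] with
   [sigma <> 0], exist for any smooth [u.g']: take [P = (u.g')^2 zeta] for a bump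
   [zeta], or [P = 0] if [u.g'] vanishes on [(0,1)].  At [t = 0] the direction of [h]
   is still [u], while where [sigma <> 0] it acquires a transverse component. *)

Lemma ex_derive_n_S_is_derive (f f' : R -> R) :
  (forall x, is_derive f x (f' x)) ->
  forall n x, ex_derive_n f (S n) x <-> ex_derive_n f' n x.
Proof.
  intros Hf [|n] x.
  - split; [intros _; exact I|]. intros _. exists (f' x). apply Hf.
  - assert (E : forall y, Derive_n f (S n) y = Derive_n f' n y).
    { intros y. replace (S n) with (n + 1)%nat by lia.
      rewrite <- Derive_n_comp. apply Derive_n_ext. intros t.
      apply is_derive_unique, Hf. }
    simpl. split; apply ex_derive_ext; intros; [|symmetry]; apply E.
Qed.

Definition Cn (n : nat) (f : R -> R) : Prop :=
  forall k x, (k <= n)%nat -> ex_derive_n f k x.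

Lemma smoothE f : smooth f <-> forall n, Cn n f.
Proof.
  split; intros H.
  - intros n k x _. apply H.
  - intros n x. apply (H n n x). lia.
Qed.

Lemma Cn_S_Derive n f :
  Cn (S n) f -> (forall x, is_derive f x (Derive f x)) /\ Cn n (Derive f).
Proof.
  intros H. assert (Df : forall x, is_derive f x (Derive f x)).
  { intros x. apply Derive_correct, (H 1%nat x). lia. }
  split; [exact Df|]. intros k x Hk. apply (ex_derive_n_S_is_derive _ _ Df), H. lia.
Qed.

Lemma Cn_S_is_derive n f f' :
  (forall x, is_derive f x (f' x)) -> Cn n f' -> Cn (S n) f.
Proof.
  intros Df H [|k] x Hk; [exact I|].
  apply (ex_derive_n_S_is_derive _ _ Df), H. lia.
Qed.

Lemma Cn_plus n f g : Cn n f -> Cn n g -> Cn n (fun x => f x + g x).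
Proof.
  intros Hf Hg k x Hk.
  apply ex_derive_n_plus; exists (mkposreal 1 Rlt_0_1);
    intros y _ k' Hk'; [apply Hf | apply Hg]; lia.
Qed.

Lemma Cn_mult n : forall f g, Cn n f -> Cn n g -> Cn n (fun x => f x * g x).
Proof.
  induction n as [|n IH]; intros f g Hf Hg.
  - intros k x Hk. replace k with 0%nat by lia. exact I.
  - destruct (Cn_S_Derive n f Hf) as [Df Hf'], (Cn_S_Derive n g Hg) as [Dg Hg'].
    assert (Hf0 : Cn n f) by (intros k x Hk; apply Hf; lia).
    assert (Hg0 : Cn n g) by (intros k x Hk; apply Hg; lia).
    apply Cn_S_is_derive with (fun x => Derive f x * g x + f x * Derive g x).
    + intros x. apply (is_derive_mult f g); [apply Df | apply Dg |].
      intros; apply Rmult_comm.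
    + apply Cn_plus; apply IH; assumption.
Qed.

Lemma smooth_ext f g : (forall x, f x = g x) -> smooth f -> smooth g.
Proof. intros E H n x. eapply ex_derive_n_ext; [exact E | apply H]. Qed.

Lemma smooth_plus f g : smooth f -> smooth g -> smooth (fun x => f x + g x).
Proof. rewrite !smoothE. intros Hf Hg n. apply Cn_plus; auto. Qed.

Lemma smooth_mult f g : smooth f -> smooth g -> smooth (fun x => f x * g x).
Proof. rewrite !smoothE. intros Hf Hg n. apply Cn_mult; auto. Qed.

Lemma smooth_const c : smooth (fun _ => c).
Proof. intros n x. apply ex_derive_n_const. Qed.

Lemma smooth_scal c f : smooth f -> smooth (fun x => c * f x).
Proof. intros Hf. apply smooth_mult; [apply smooth_const | exact Hf]. Qed.

Lemma smooth_minus f g : smooth f -> smooth g -> smooth (fun x => f x - g x).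
Proof.
  intros Hf Hg. apply (smooth_ext (fun x => f x + -1 * g x)); [intros; ring|].
  apply smooth_plus, smooth_scal; assumption.
Qed.

Ltac solve_smooth :=
  lazymatch goal with
  | |- smooth (fun _ => ?c) => apply (smooth_const c)
  | |- smooth (fun x => @?f x + @?g x) => apply (smooth_plus f g); solve_smooth
  | |- smooth (fun x => @?f x - @?g x) => apply (smooth_minus f g); solve_smooth
  | |- smooth (fun x => @?f x * @?g x) => apply (smooth_mult f g); solve_smooth
  | |- _ => assumption
  end.

Lemma smooth_Derive f : smooth f -> smooth (Derive f).
Proof. rewrite !smoothE. intros H n. apply (Cn_S_Derive n f (H (S n))). Qed.

Lemma smooth_ex_derive f x : smooth f -> ex_derive f x.
Proof. intros H. apply (H 1%nat x). Qed.

Lemma smooth_comp_trans f c : smooth f -> smooth (fun x => f (x + c)).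
Proof. intros H n x. apply ex_derive_n_comp_trans, H. Qed.

Lemma smooth_comp_opp f : smooth f -> smooth (fun x => f (- x)).
Proof.
  intros H n x. apply ex_derive_n_comp_opp.
  exists (mkposreal 1 Rlt_0_1). intros; apply H.
Qed.

(** * A smooth bump function *)

Fixpoint peval (l : list R) (y : R) : R :=
  match l with nil => 0 | c :: l' => c + y * peval l' y end.

Fixpoint padd (l m : list R) : list R :=
  match l, m with
  | nil, _ => m
  | _, nil => l
  | a :: l', b :: m' => (a + b) :: padd l' m'
  end.

Lemma peval_padd l : forall m y, peval (padd l m) y = peval l y + peval m y.
Proof. induction l as [|a l IH]; intros [|b m] y; simpl; try ring. rewrite IH. ring. Qed.

Fixpoint pderiv (l : list R) : list R :=
  match l with nil => nil | _ :: l' => padd l' (0 :: pderiv l') end.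

Lemma is_derive_peval l y : is_derive (peval l) y (peval (pderiv l) y).
Proof.
  induction l as [|c l IH]; simpl.
  - exact (is_derive_const 0 y).
  - rewrite peval_padd. simpl.
    replace (peval l y + (0 + y * peval (pderiv l) y))
      with (0 + (1 * peval l y + y * peval (pderiv l) y)) by ring.
    apply (is_derive_ext (fun t => c + t * peval l t)); [reflexivity|].
    apply (is_derive_plus (fun _ => c)); [apply (is_derive_const c)|].
    apply (is_derive_mult (K := R_AbsRing) (fun t => t)); [exact (is_derive_id y) | exact IH |].
    intros; apply Rmult_comm.
Qed.

(* The derivative of [p(1/x) exp(-1/x)] is [q(1/x) exp(-1/x)] with
   [q(y) = y^2 (p(y) - p'(y))]. *)
Definition flat_deriv (l : list R) : list R :=
  0 :: 0 :: padd l (map (fun a => - a) (pderiv l)).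

Lemma peval_flat_deriv l y :
  peval (flat_deriv l) y = y * y * (peval l y - peval (pderiv l) y).
Proof.
  assert (Hopp : forall m, peval (map (fun a => - a) m) y = - peval m y).
  { induction m as [|a m IH]; simpl; [ring|]. rewrite IH. ring. }
  unfold flat_deriv. simpl. rewrite peval_padd, Hopp. ring.
Qed.

Definition flat (l : list R) (x : R) : R :=
  if Rle_dec x 0 then 0 else peval l (/ x) * exp (- / x).

Fixpoint coef_norm (l : list R) : R :=
  match l with nil => 0 | c :: l' => Rabs c + coef_norm l' end.

Lemma coef_norm_ge0 l : 0 <= coef_norm l.
Proof. induction l as [|c l IH]; simpl; [lra|]. pose proof (Rabs_pos c). lra. Qed.

Lemma peval_bound l y : 1 <= y -> Rabs (peval l y) <= coef_norm l * y ^ length l.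
Proof.
  intros Hy. induction l as [|c l IH]; simpl.
  - rewrite Rabs_R0. lra.
  - pose proof (coef_norm_ge0 l). pose proof (Rabs_pos c).
    assert (1 <= y ^ length l) by (apply pow_R1_Rle; lra).
    eapply Rle_trans; [apply Rabs_triang|].
    rewrite Rabs_mult, (Rabs_right y) by lra.
    assert (y * Rabs (peval l y) <= y * (coef_norm l * y ^ length l))
      by (apply Rmult_le_compat_l; lra).
    assert (Rabs c <= Rabs c * (y * y ^ length l)).
    { rewrite <- (Rmult_1_r (Rabs c)) at 1. apply Rmult_le_compat_l; nra. }
    nra.
Qed.

Lemma exp_INR_mult (n : nat) z : exp (INR n * z) = exp z ^ n.
Proof.
  induction n as [|n IH].
  - simpl. rewrite Rmult_0_l. apply exp_0.
  - rewrite S_INR, Rmult_plus_distr_r, exp_plus, IH, Rmult_1_l. simpl. ring.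
Qed.

Lemma pow_le_exp (M : nat) y : (1 <= M)%nat -> 0 <= y -> y ^ M <= INR M ^ M * exp y.
Proof.
  intros HM Hy. assert (HMp : 0 < INR M) by (apply lt_0_INR; lia).
  assert (Hexp : exp y = exp (y / INR M) ^ M).
  { rewrite <- exp_INR_mult. f_equal. field. lra. }
  assert (H1 : y / INR M <= exp (y / INR M)).
  { pose proof (exp_ineq1_le (y / INR M)). lra. }
  rewrite Hexp. replace (y ^ M) with (INR M ^ M * (y / INR M) ^ M).
  - apply Rmult_le_compat_l; [apply pow_le; lra|]. apply pow_incr. split; [|exact H1].
    apply Rdiv_le_0_compat; lra.
  - rewrite <- Rpow_mult_distr. f_equal. field. lra.
Qed.

Lemma flat_sqr_bound l :
  exists K, forall h, Rabs h <= 1 -> Rabs (flat l h) <= K * (h * h).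
Proof.
  set (M := (length l + 2)%nat).
  exists (coef_norm l * INR M ^ M). intros h Hh. unfold flat.
  pose proof (coef_norm_ge0 l) as HN.
  assert (HMM : 0 <= INR M ^ M) by (apply pow_le, pos_INR).
  destruct (Rle_dec h 0) as [Hle|Hgt].
  { rewrite Rabs_R0. apply Rmult_le_pos; [apply Rmult_le_pos|]; nra. }
  pose proof (Rle_abs h).
  set (y := / h).
  assert (Hy : 1 <= y) by (unfold y; rewrite <- Rinv_1; apply Rinv_le_contravar; lra).
  assert (Hhy : h = / y) by (unfold y; rewrite Rinv_inv; reflexivity).
  rewrite Rabs_mult, (Rabs_right (exp _)) by (left; apply exp_pos).
  rewrite exp_Ropp. fold y. rewrite Hhy.
  pose proof (exp_pos y).
  apply Rmult_le_reg_r with (exp y * (y * y)); [apply Rmult_lt_0_compat; nra|].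
  replace (Rabs (peval l y) * / exp y * (exp y * (y * y))) with (Rabs (peval l y) * (y * y))
    by (field; lra).
  replace (coef_norm l * INR M ^ M * (/ y * / y) * (exp y * (y * y)))
    with (coef_norm l * (INR M ^ M * exp y)) by (field; lra).
  assert (HyM : y ^ M = y ^ length l * (y * y)) by (unfold M; rewrite pow_add; simpl; ring).
  assert (0 < y ^ length l) by (apply pow_lt; lra).
  apply Rle_trans with (coef_norm l * y ^ length l * (y * y)).
  - apply Rmult_le_compat_r; [nra | apply peval_bound; exact Hy].
  - rewrite Rmult_assoc, <- HyM. apply Rmult_le_compat_l; [exact HN|].
    apply pow_le_exp; [unfold M; lia | lra].
Qed.

Lemma is_derive_0_of_sqr_bound (f : R -> R) K :
  f 0 = 0 -> (forall h, Rabs h <= 1 -> Rabs (f h) <= K * (h * h)) -> is_derive f 0 0.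
Proof.
  intros H0 HK. apply is_derive_Reals. intros eps Heps.
  pose proof (Rabs_pos K) as HK0.
  assert (Hd : 0 < Rmin 1 (eps / (Rabs K + 1)))
    by (apply Rmin_pos; [lra | apply Rdiv_lt_0_compat; lra]).
  exists (mkposreal _ Hd). intros h Hh0 Hh. simpl in Hh.
  pose proof (Rmin_l 1 (eps / (Rabs K + 1))). pose proof (Rmin_r 1 (eps / (Rabs K + 1))).
  rewrite Rplus_0_l, H0, Rminus_0_r, Rminus_0_r.
  assert (Hh1 : Rabs h <= 1) by lra.
  assert (Hhpos : 0 < Rabs h) by (apply Rabs_pos_lt; exact Hh0).
  unfold Rdiv. rewrite Rabs_mult, Rabs_inv.
  apply Rle_lt_trans with (Rabs K * (Rabs h * Rabs h) * / Rabs h).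
  - apply Rmult_le_compat_r; [left; apply Rinv_0_lt_compat; lra|].
    eapply Rle_trans; [apply HK, Hh1|].
    rewrite <- Rabs_mult, <- (Rabs_right (h * h)) at 1 by (apply Rle_ge, Rle_0_sqr).
    apply Rmult_le_compat_r; [apply Rabs_pos | apply Rle_abs].
  - replace (Rabs K * (Rabs h * Rabs h) * / Rabs h) with (Rabs K * Rabs h) by (field; lra).
    assert (Rabs h * (Rabs K + 1) < eps).
    { apply Rmult_lt_reg_r with (/ (Rabs K + 1)); [apply Rinv_0_lt_compat; lra|].
      replace (Rabs h * (Rabs K + 1) * / (Rabs K + 1)) with (Rabs h) by (field; lra).
      lra. }
    nra.
Qed.

Lemma locally_gt x a : a < x -> locally x (fun t => a < t).
Proof.
  intros H. assert (Hp : 0 < x - a) by lra. exists (mkposreal _ Hp).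
  intros y Hy. change (Rabs (y - x) < x - a) in Hy. apply Rabs_def2 in Hy. lra.
Qed.

Lemma locally_lt x a : x < a -> locally x (fun t => t < a).
Proof.
  intros H. assert (Hp : 0 < a - x) by lra. exists (mkposreal _ Hp).
  intros y Hy. change (Rabs (y - x) < a - x) in Hy. apply Rabs_def2 in Hy. lra.
Qed.

Lemma is_derive_flat l x : is_derive (flat l) x (flat (flat_deriv l) x).
Proof.
  destruct (Rtotal_order x 0) as [Hx|[Hx|Hx]].
  - unfold flat at 2. destruct (Rle_dec x 0) as [_|]; [|lra].
    apply is_derive_ext_loc with (fun _ => 0); [|apply (is_derive_const 0)].
    eapply filter_imp; [|apply (locally_lt x 0 Hx)]. intros t Ht.
    unfold flat. destruct (Rle_dec t 0); [reflexivity | lra].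
  - subst x. unfold flat at 2. destruct (Rle_dec 0 0) as [_|]; [|lra].
    destruct (flat_sqr_bound l) as [K HK].
    apply (is_derive_0_of_sqr_bound _ K); [|exact HK].
    unfold flat. destruct (Rle_dec 0 0); [reflexivity | lra].
  - unfold flat at 2. destruct (Rle_dec x 0); [lra|].
    apply is_derive_ext_loc with (fun y => peval l (/ y) * exp (- / y)).
    { eapply filter_imp; [|apply (locally_gt x 0 Hx)]. intros t Ht.
      unfold flat. destruct (Rle_dec t 0); [lra | reflexivity]. }
    auto_derive.
    + repeat split; try lra. exists (peval (pderiv l) (/ x)). apply is_derive_peval.
    + replace (Derive (fun y => peval l y) (/ x)) with (peval (pderiv l) (/ x))
        by (symmetry; apply is_derive_unique, is_derive_peval).
      rewrite peval_flat_deriv. field. lra.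
Qed.

Lemma smooth_flat l : smooth (flat l).
Proof.
  intros n. revert l. induction n as [|n IH]; intros l x; [exact I|].
  apply (ex_derive_n_S_is_derive _ _ (is_derive_flat l)), IH.
Qed.

(* [psi x = exp (-1/x)] for [x > 0], [0] otherwise. *)
Definition psi : R -> R := flat (1 :: nil).

Lemma psi_le0 x : x <= 0 -> psi x = 0.
Proof. intros Hx. unfold psi, flat. destruct (Rle_dec x 0); [reflexivity | lra]. Qed.

Lemma psi_gt0 x : 0 < x -> 0 < psi x.
Proof.
  intros Hx. unfold psi, flat. destruct (Rle_dec x 0); [lra|]. simpl.
  rewrite Rmult_0_r, Rplus_0_r, Rmult_1_l. apply exp_pos.
Qed.

Definition bump (a b t : R) : R := psi (t - a) * psi (b - t).

Lemma smooth_bump a b : smooth (bump a b).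
Proof.
  apply (smooth_mult (fun t => psi (t - a)) (fun t => psi (b - t))).
  - apply (smooth_comp_trans psi (- a)), smooth_flat.
  - apply (smooth_ext (fun t => psi (- t + b))); [intros t; f_equal; ring|].
    apply (smooth_comp_opp (fun t => psi (t + b))), smooth_comp_trans, smooth_flat.
Qed.

Lemma bump_out a b t : t <= a \/ b <= t -> bump a b t = 0.
Proof.
  unfold bump. intros [H|H]; [rewrite (psi_le0 (t - a)) | rewrite (psi_le0 (b - t))];
    lra || ring.
Qed.

Lemma bump_gt0 a b t : a < t < b -> 0 < bump a b t.
Proof. intros H. apply Rmult_lt_0_compat; apply psi_gt0; lra. Qed.

Lemma Derive_bump_out a b t : t < a \/ b < t -> Derive (bump a b) t = 0.
Proof.
  intros Ht. rewrite (Derive_ext_loc _ (fun _ => 0)), Derive_const; [reflexivity|].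
  destruct Ht as [Ht|Ht]; eapply filter_imp;
    [| apply (locally_lt t a Ht) | | apply (locally_gt t b Ht)];
    intros s Hs; apply bump_out; lra.
Qed.

Lemma bounded_on_01 f : (forall x, ex_derive f x) ->
  exists M, 0 <= M /\ forall t, 0 <= t <= 1 -> Rabs (f t) <= M.
Proof.
  intros Hf.
  destruct (continuity_ab_maj (fun t => Rabs (f t)) 0 1) as [t0 [Ht0 _]]; [lra| |].
  - intros c _. apply (continuity_pt_comp f Rabs); [|apply Rcontinuity_abs].
    apply derivable_continuous_pt, ex_derive_Reals_0, Hf.
  - exists (Rabs (f t0)). split; [apply Rabs_pos | exact Ht0].
Qed.

Lemma positive_lower_bound_on_01 f : (forall x, ex_derive f x) ->
  (forall t, 0 <= t <= 1 -> 0 < f t) ->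
  exists m, 0 < m /\ forall t, 0 <= t <= 1 -> m <= f t.
Proof.
  intros Hf Hpos. destruct (continuity_ab_min f 0 1) as [t0 [Ht0 Ht01]]; [lra| |].
  - intros c _. apply derivable_continuous_pt, ex_derive_Reals_0, Hf.
  - exists (f t0). split; [apply Hpos, Ht01 | exact Ht0].
Qed.

Lemma Derive_n_bounded_on_01 f : smooth f -> forall k, exists M, 0 <= M /\
  forall j t, (j <= k)%nat -> 0 <= t <= 1 -> Rabs (Derive_n f j t) <= M.
Proof.
  intros Hf k. induction k as [|k [M [HM0 HM]]].
  - destruct (bounded_on_01 (Derive_n f 0)) as [M [HM0 HM]]; [intros x; apply (Hf 1%nat)|].
    exists M. split; [exact HM0|]. intros j t Hj Ht. replace j with 0%nat by lia. auto.
  - destruct (bounded_on_01 (Derive_n f (S k))) as [M' [_ HM']];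
      [intros x; apply (Hf (S (S k)))|].
    exists (Rmax M M'). split; [eapply Rle_trans; [exact HM0 | apply Rmax_l]|].
    intros j t Hj Ht. destruct (Nat.eq_dec j (S k)) as [->|Hjk].
    + eapply Rle_trans; [apply HM', Ht | apply Rmax_r].
    + eapply Rle_trans; [apply HM; [lia | exact Ht] | apply Rmax_l].
Qed.

Lemma Ck_close_refl k eps f : eps > 0 -> Ck_close k eps f f.
Proof.
  intros Heps j t _ _. rewrite (Derive_n_ext _ (fun _ => 0)) by (intros; ring).
  destruct j; [simpl | rewrite Derive_n_const]; rewrite Rabs_R0; lra.
Qed.

Lemma Ck_close_small_multiple P k eps : smooth P -> eps > 0 ->
  exists d, 0 < d /\ forall e f f', 0 <= e <= d ->
    (forall t, f' t - f t = e * P t) -> Ck_close k eps f f'.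
Proof.
  intros HP Heps. destruct (Derive_n_bounded_on_01 P HP k) as [M [HM0 HM]].
  exists (eps / (2 * (M + 1))). split; [apply Rdiv_lt_0_compat; lra|].
  intros e f f' He Hf j t Hj Ht.
  rewrite (Derive_n_ext _ (fun s => e * P s) j t Hf), Derive_n_scal_l, Rabs_mult,
    (Rabs_right e) by lra.
  specialize (HM j t Hj Ht).
  apply Rle_lt_trans with (eps / (2 * (M + 1)) * M).
  - apply Rmult_le_compat; lra || apply Rabs_pos.
  - apply Rmult_lt_reg_r with (2 * (M + 1)); [lra|].
    replace (eps / (2 * (M + 1)) * M * (2 * (M + 1))) with (eps * M) by (field; lra). nra.
Qed.

Lemma positive_small_perturbation f0 f1 :
  (forall x, ex_derive f0 x) -> (forall x, ex_derive f1 x) ->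
  (forall t, 0 <= t <= 1 -> 0 < f0 t) ->
  exists d, 0 < d /\ forall e t, 0 <= e <= d -> 0 <= t <= 1 -> 0 < f0 t + e * f1 t.
Proof.
  intros H0 H1 Hpos.
  destruct (positive_lower_bound_on_01 f0 H0 Hpos) as [m [Hm Hm0]].
  destruct (bounded_on_01 f1 H1) as [L [HL HL1]].
  exists (m / (2 * (L + 1))). split; [apply Rdiv_lt_0_compat; lra|].
  intros e t He Ht. specialize (Hm0 t Ht). specialize (HL1 t Ht).
  apply Rabs_le_between in HL1.
  assert (e * (L + 1) <= m / 2).
  { apply Rmult_le_reg_r with (/ (L + 1)); [apply Rinv_0_lt_compat; lra|].
    replace (e * (L + 1) * / (L + 1)) with e by (field; lra).
    replace (m / 2 * / (L + 1)) with (m / (2 * (L + 1))) by (field; lra). lra. }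
  nra.
Qed.

(** * T^2-invariant stable Hamiltonian structures *)

Lemma lam_wedge_om_eq F t :
  lam_wedge_om F t ex ey et = g2 F t * h1 F t - g1 F t * h2 F t + g3 F t * h3 F t.
Proof. unfold lam_wedge_om, lam, om, wedge11, ex, ey, et, cx, cy, ct. simpl. ring. Qed.

Lemma h_nonzero F t : h3 F t = 0 -> lam_wedge_om F t ex ey et > 0 ->
  0 < h1 F t * h1 F t + h2 F t * h2 F t.
Proof.
  rewrite lam_wedge_om_eq. intros H3 Hpos. rewrite H3 in Hpos.
  destruct (Req_dec (h1 F t) 0) as [E1|]; [destruct (Req_dec (h2 F t) 0) as [E2|]|]; [|nra..].
  rewrite E1, E2 in Hpos. lra.
Qed.

Lemma eq0_of_mult_eq0_2 a b x : 0 < a * a + b * b -> a * x = 0 -> b * x = 0 -> x = 0.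
Proof.
  intros Hab Ha Hb. apply (Rmult_eq_reg_l (a * a + b * b)); [|lra].
  replace ((a * a + b * b) * x) with (a * (a * x) + b * (b * x)) by ring.
  rewrite Ha, Hb. ring.
Qed.

(* With [h3 = 0], [ker omega] is spanned by [h2 d/dx - h1 d/dy] and [d lambda] only
   involves [dt], so the kernel condition says [(g1', g2')] is parallel to [(h1, h2)]. *)
Lemma ker_om_sub_ker_dlam_iff F t : h3 F t = 0 -> lam_wedge_om F t ex ey et > 0 ->
  (forall v, (forall w, om F t v w = 0) -> forall w, dlam F t v w = 0) <->
  Derive (g2 F) t * h1 F t - Derive (g1 F) t * h2 F t = 0.
Proof.
  intros H3 Hpos. pose proof (h_nonzero F t H3 Hpos) as Hh.
  unfold dlam, om, wedge11, cx, cy, ct. rewrite H3.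
  set (a := h1 F t) in *. set (b := h2 F t) in *.
  set (u1 := Derive (g1 F) t). set (u2 := Derive (g2 F) t).
  split.
  - intros K. specialize (K (b, - a, 0)). simpl in K.
    assert (Hv : forall w : vec, a * (0 * fst (fst w) - snd w * b)
      + b * (0 * snd (fst w) - snd w * - a) + 0 * (b * snd (fst w) - fst (fst w) * - a) = 0)
      by (intros; ring).
    specialize (K Hv et). unfold et in K. simpl in K. lra.
  - intros Hpar [[vx vy] vt] Hv [[wx wy] wt]. simpl in *.
    pose proof (Hv ex) as Ex. pose proof (Hv ey) as Ey. pose proof (Hv et) as Et.
    unfold ex, ey, et in Ex, Ey, Et. simpl in Ex, Ey, Et.
    assert (Hav : a * vt = 0) by nra. assert (Hbv : b * vt = 0) by nra.
    pose proof (eq0_of_mult_eq0_2 a b vt Hh Hav Hbv). subst vt.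
    assert (Hk : a * vx + b * vy = 0) by lra.
    assert (HX : u1 * vx + u2 * vy = 0).
    { apply (eq0_of_mult_eq0_2 a b _ Hh).
      - replace (a * (u1 * vx + u2 * vy))
          with (u1 * (a * vx + b * vy) + vy * (u2 * a - u1 * b)) by ring.
        rewrite Hk, Hpar. ring.
      - replace (b * (u1 * vx + u2 * vy))
          with (u2 * (a * vx + b * vy) - vx * (u2 * a - u1 * b)) by ring.
        rewrite Hk, Hpar. ring. }
    replace (u1 * (0 * wx - wt * vx) + u2 * (0 * wy - wt * vy)) with (- wt * (u1 * vx + u2 * vy))
      by ring.
    rewrite HX. ring.
Qed.

Definition perturb_perp (F : T2form) (A B e : R) (P Q : R -> R) : T2form :=
  mkT2 (fun t => g1 F t + e * (- B * P t)) (fun t => g2 F t + e * (A * P t)) (g3 F)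
       (fun t => h1 F t + e * (- B * Q t)) (fun t => h2 F t + e * (A * Q t)) (h3 F).

Lemma lam_wedge_om_perturb_perp F A B e P Q t :
  lam_wedge_om (perturb_perp F A B e P Q) t ex ey et =
  lam_wedge_om F t ex ey et
  + e * (P t * (A * h1 F t + B * h2 F t) - Q t * (A * g1 F t + B * g2 F t)).
Proof. rewrite !lam_wedge_om_eq. simpl. ring. Qed.

Lemma dlam_om_cross_perturb_perp F A B e P Q t :
  ex_derive (g1 F) t -> ex_derive (g2 F) t -> ex_derive P t ->
  let F' := perturb_perp F A B e P Q in
  Derive (g2 F') t * h1 F' t - Derive (g1 F') t * h2 F' t =
  Derive (g2 F) t * h1 F t - Derive (g1 F) t * h2 F t
  + e * (Derive P t * (A * h1 F t + B * h2 F t)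
         - Q t * (A * Derive (g1 F) t + B * Derive (g2 F) t)).
Proof.
  intros H1 H2 HP. simpl.
  assert (DP : forall c, ex_derive (fun s => c * P s) t)
    by (intros c; apply ex_derive_scal, HP).
  rewrite !Derive_plus by (apply H1 || apply H2 || apply ex_derive_scal, DP).
  rewrite (Derive_scal (fun x => A * P x)), (Derive_scal (fun x => - B * P x)),
    (Derive_scal P A), (Derive_scal P (- B)).
  ring.
Qed.

Lemma SHS_perturb_perp F A B P sigma :
  SHS_on_U F -> (forall t, h3 F t = 0) -> smooth P -> smooth sigma ->
  (forall t, 0 <= t <= 1 ->
     Derive P t = (A * Derive (g1 F) t + B * Derive (g2 F) t) * sigma t) ->
  exists d, 0 < d /\ forall e, 0 <= e <= d ->
    SHS_on_U (perturb_perp F A B e P (fun t => (A * h1 F t + B * h2 F t) * sigma t)).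
Proof.
  intros [[S1 [S2 [S3 [S4 [S5 S6]]]]] HS] H3 SP Ssigma HPsigma.
  set (Q := fun t => (A * h1 F t + B * h2 F t) * sigma t).
  assert (SQ : smooth Q) by (unfold Q; solve_smooth).
  destruct (positive_small_perturbation
    (fun t => g2 F t * h1 F t - g1 F t * h2 F t + g3 F t * h3 F t)
    (fun t => P t * (A * h1 F t + B * h2 F t) - Q t * (A * g1 F t + B * g2 F t)))
    as [d [Hd Hpos]].
  - intros x. apply smooth_ex_derive. solve_smooth.
  - intros x. apply smooth_ex_derive. solve_smooth.
  - intros t Ht. rewrite <- lam_wedge_om_eq. apply HS, Ht.
  - exists d. split; [exact Hd|]. intros e He. split.
    + repeat split; simpl; solve_smooth.
    + intros t Ht. destruct (HS t Ht) as [Hlwo [Hdom Hker]].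
      assert (Hlwo' : lam_wedge_om (perturb_perp F A B e P Q) t ex ey et > 0).
      { rewrite lam_wedge_om_perturb_perp, lam_wedge_om_eq. apply Hpos; assumption. }
      split; [exact Hlwo'|]. split; [exact Hdom|].
      apply ker_om_sub_ker_dlam_iff; [apply H3 | exact Hlwo'|].
      apply ker_om_sub_ker_dlam_iff in Hker; [|apply H3 | exact Hlwo].
      rewrite dlam_om_cross_perturb_perp by (apply smooth_ex_derive; assumption).
      rewrite Hker, HPsigma by exact Ht. unfold Q. ring.
Qed.

Lemma T2_Ck_close_perturb_perp F A B P Q k eps : smooth P -> smooth Q -> eps > 0 ->
  exists d, 0 < d /\ forall e, 0 <= e <= d -> T2_Ck_close k eps F (perturb_perp F A B e P Q).
Proof.
  intros SP SQ Heps.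
  destruct (Ck_close_small_multiple (fun t => - B * P t) k eps) as [d1 [Hd1 C1]];
    [apply smooth_scal, SP | exact Heps|].
  destruct (Ck_close_small_multiple (fun t => A * P t) k eps) as [d2 [Hd2 C2]];
    [apply smooth_scal, SP | exact Heps|].
  destruct (Ck_close_small_multiple (fun t => - B * Q t) k eps) as [d3 [Hd3 C3]];
    [apply smooth_scal, SQ | exact Heps|].
  destruct (Ck_close_small_multiple (fun t => A * Q t) k eps) as [d4 [Hd4 C4]];
    [apply smooth_scal, SQ | exact Heps|].
  set (d := Rmin (Rmin d1 d2) (Rmin d3 d4)).
  pose proof (Rmin_l d1 d2). pose proof (Rmin_r d1 d2).
  pose proof (Rmin_l d3 d4). pose proof (Rmin_r d3 d4).
  pose proof (Rmin_l (Rmin d1 d2) (Rmin d3 d4)). pose proof (Rmin_r (Rmin d1 d2) (Rmin d3 d4)).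
  exists d. split; [unfold d; repeat apply Rmin_pos; assumption|].
  intros e He. unfold d in He.
  repeat split; simpl; try apply Ck_close_refl; try exact Heps;
    [apply (C1 e) | apply (C2 e) | apply (C3 e) | apply (C4 e)]; try lra; intros t; ring.
Qed.

Lemma supp_in_interior_perturb_perp F A B e P Q a b : 0 < a -> a < b -> b < 1 ->
  (forall t, t < a \/ b < t -> P t = 0 /\ Q t = 0) ->
  supp_in_interior F (perturb_perp F A B e P Q).
Proof.
  intros Ha Hab Hb HPQ. exists a, b. split; [exact Ha|]. split; [exact Hab|].
  split; [exact Hb|]. intros t Ht. destruct (HPQ t Ht) as [HP HQ].
  simpl. rewrite HP, HQ. repeat split; ring.
Qed.

Lemma slope_nonconstant_perturb_perp F e P Q t :
  ~ slope_nonconstant F -> 0 < h1 F 0 * h1 F 0 + h2 F 0 * h2 F 0 ->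
  e <> 0 -> Q 0 = 0 -> 0 <= t <= 1 -> Q t <> 0 ->
  slope_nonconstant (perturb_perp F (h1 F 0) (h2 F 0) e P Q).
Proof.
  intros Hconst Hh0 He HQ0 Ht HQt. exists t, 0. split; [exact Ht|]. split; [lra|].
  simpl. rewrite HQ0.
  assert (Hpar : h1 F t * h2 F 0 - h2 F t * h1 F 0 = 0).
  { apply NNPP. intros Hne. apply Hconst. exists t, 0. split; [exact Ht|]. split; [lra | exact Hne]. }
  replace ((h1 F t + e * (- h2 F 0 * Q t)) * (h2 F 0 + e * (h1 F 0 * 0)) -
           (h2 F t + e * (h1 F 0 * Q t)) * (h1 F 0 + e * (- h2 F 0 * 0)))
    with ((h1 F t * h2 F 0 - h2 F t * h1 F 0)
          - e * Q t * (h1 F 0 * h1 F 0 + h2 F 0 * h2 F 0)) by ring.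
  rewrite Hpar. intros H0.
  assert (e * Q t * (h1 F 0 * h1 F 0 + h2 F 0 * h2 F 0) = 0) by lra.
  apply Rmult_integral in H. destruct H as [H|H]; [|lra].
  apply Rmult_integral in H. tauto.
Qed.

Lemma dot_ne0_of_parallel A B x1 x2 :
  x1 * B - x2 * A = 0 -> 0 < A * A + B * B -> 0 < x1 * x1 + x2 * x2 -> A * x1 + B * x2 <> 0.
Proof.
  intros Hpar HA Hx Hdot.
  assert (Id : (A * x1 + B * x2) * (A * x1 + B * x2) + (x1 * B - x2 * A) * (x1 * B - x2 * A)
               = (A * A + B * B) * (x1 * x1 + x2 * x2)) by ring.
  rewrite Hdot, Hpar in Id. nra.
Qed.

(* [(m^2 zeta)' = m (2 m' zeta + m zeta')] is divisible by [m]. *)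
Lemma exists_bump_with_primitive m : smooth m ->
  exists P sigma a b, 0 < a /\ a < b /\ b < 1 /\ smooth P /\ smooth sigma /\
    (forall t, t < a \/ b < t -> P t = 0 /\ sigma t = 0) /\
    (forall t, 0 <= t <= 1 -> Derive P t = m t * sigma t) /\
    exists t, 0 <= t <= 1 /\ sigma t <> 0.
Proof.
  intros Sm.
  destruct (classic (exists t1, 0 < t1 < 1 /\ m t1 <> 0)) as [[t1 [Ht1 Hm1]]|Hm0].
  - set (a := t1 / 2). set (b := (1 + t1) / 2). set (zeta := bump a b).
    assert (Szeta : smooth zeta) by apply smooth_bump.
    pose proof (smooth_Derive m Sm) as Sm'. pose proof (smooth_Derive zeta Szeta) as Szeta'.
    set (P := fun t => m t * m t * zeta t).
    set (sigma := fun t => 2 * Derive m t * zeta t + m t * Derive zeta t).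
    assert (HP : forall t, is_derive P t (m t * sigma t)).
    { intros t. unfold P, sigma. auto_derive.
      - repeat split; apply smooth_ex_derive; assumption.
      - change (fun x => m x) with m. change (fun x => zeta x) with zeta. ring. }
    assert (Hout : forall t, t < a \/ b < t -> P t = 0 /\ sigma t = 0).
    { intros t Ht. unfold P, sigma, zeta.
      rewrite bump_out, Derive_bump_out by (exact Ht || (destruct Ht; [left|right]; lra)).
      split; ring. }
    assert (Hsigma : exists t, 0 <= t <= 1 /\ sigma t <> 0).
    { apply NNPP. intros Hsigma.
      assert (Hsigma0 : forall t, 0 <= t <= t1 -> sigma t = 0).
      { intros t Ht. apply NNPP. intros Hne. apply Hsigma. exists t. split; [lra | exact Hne]. }
      assert (HP0 : P 0 = P t1).
      { apply eq_is_derive; [|lra]. intros t Ht.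
        replace (@zero R_NormedModule) with (m t * sigma t) by (rewrite Hsigma0 by lra; apply Rmult_0_r).
        apply HP. }
      assert (HPt1 : 0 < P t1).
      { unfold P. apply Rmult_lt_0_compat; [nra|]. apply bump_gt0. unfold a, b. lra. }
      revert HP0 HPt1. unfold P, zeta. rewrite (bump_out a b 0) by (left; unfold a; lra). lra. }
    exists P, sigma, a, b.
    split; [unfold a; lra|]. split; [unfold a, b; lra|]. split; [unfold b; lra|].
    split; [unfold P; solve_smooth|]. split; [unfold sigma; solve_smooth|].
    split; [exact Hout|]. split; [|exact Hsigma].
    intros t _. apply is_derive_unique, HP.
  - exists (fun _ => 0), (bump (1 / 4) (3 / 4)), (1 / 4), (3 / 4).
    split; [lra|]. split; [lra|]. split; [lra|].
    split; [apply smooth_const|]. split; [apply smooth_bump|].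
    split; [intros t Ht; rewrite bump_out by (destruct Ht; [left|right]; lra); lra|].
    split.
    + intros t Ht. rewrite Derive_const.
      destruct (Rlt_dec 0 t) as [H0|H0]; [destruct (Rlt_dec t 1) as [H1|H1]|].
      * replace (m t) with 0; [ring|].
        apply NNPP. intros Hne. apply Hm0. exists t. split; [lra | auto].
      * rewrite bump_out by lra. ring.
      * rewrite bump_out by lra. ring.
    + exists (1 / 2). split; [lra|]. apply Rgt_not_eq, bump_gt0. lra.
Qed.

Lemma T2_invariant_perturbation F k eps :
  SHS_on_U F -> (forall t, h3 F t = 0) -> eps > 0 ->
  exists F', SHS_on_U F' /\ supp_in_interior F F' /\ T2_Ck_close k eps F F' /\
             slope_nonconstant F'.
Proof.
  intros HF H3 Heps.
  destruct (classic (slope_nonconstant F)) as [Hsl|Hconst].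
  { exists F. split; [exact HF|]. split.
    - exists (1 / 4), (3 / 4). repeat split; lra.
    - split; [repeat split; apply Ck_close_refl, Heps | exact Hsl]. }
  assert (Hh : forall t, 0 <= t <= 1 -> 0 < h1 F t * h1 F t + h2 F t * h2 F t).
  { intros t Ht. apply h_nonzero; [apply H3 | apply HF, Ht]. }
  set (A := h1 F 0). set (B := h2 F 0).
  pose proof HF as [[S1 [S2 [_ [S4 [S5 _]]]]] _].
  destruct (exists_bump_with_primitive (fun t => A * Derive (g1 F) t + B * Derive (g2 F) t))
    as (P & sigma & a & b & Ha & Hab & Hb & SP & Ssigma & Hout & HPsigma & t0 & Ht0 & Hsigma0).
  { pose proof (smooth_Derive _ S1). pose proof (smooth_Derive _ S2). solve_smooth. }
  set (Q := fun t => (A * h1 F t + B * h2 F t) * sigma t).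
  destruct (SHS_perturb_perp F A B P sigma HF H3 SP Ssigma HPsigma) as [d1 [Hd1 HS']].
  destruct (T2_Ck_close_perturb_perp F A B P Q k eps SP) as [d2 [Hd2 HC']];
    [unfold Q; solve_smooth | exact Heps |].
  set (e := Rmin d1 d2).
  assert (He : 0 < e <= d1 /\ e <= d2)
    by (unfold e; pose proof (Rmin_l d1 d2); pose proof (Rmin_r d1 d2);
        pose proof (Rmin_pos d1 d2 Hd1 Hd2); lra).
  exists (perturb_perp F A B e P Q). split; [apply HS'; lra|]. split.
  { apply supp_in_interior_perturb_perp with a b; try assumption.
    intros t Ht. destruct (Hout t Ht) as [HP Hs]. unfold Q. rewrite Hs. split; [exact HP | ring]. }
  split; [apply HC'; lra|].
  apply slope_nonconstant_perturb_perp with t0; try assumption.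
  - apply Hh. lra.
  - lra.
  - unfold Q. rewrite (proj2 (Hout 0 ltac:(lra))). ring.
  - unfold Q. apply Rmult_integral_contrapositive. split; [|exact Hsigma0].
    apply dot_ne0_of_parallel; [| apply Hh; lra | apply Hh, Ht0].
    apply NNPP. intros Hne. apply Hconst. exists t0, 0. split; [exact Ht0|]. split; [lra|exact Hne].
Qed.

Theorem lemma6p2 (n : nat) (U : nat -> T2form) :
  (forall i, (i < n)%nat -> SHS_on_U (U i) /\ forall t, h3 (U i) t = 0) ->
  forall (k : nat) (eps : R), eps > 0 ->
  exists U' : nat -> T2form,
    forall i, (i < n)%nat ->
      SHS_on_U (U' i) /\
      supp_in_interior (U i) (U' i) /\
      T2_Ck_close k eps (U i) (U' i) /\
      slope_nonconstant (U' i).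
Proof.
  intros HU k eps Heps.
  assert (Hchoice : forall i, exists F', (i < n)%nat ->
    SHS_on_U F' /\ supp_in_interior (U i) F' /\ T2_Ck_close k eps (U i) F' /\
    slope_nonconstant F').
  { intros i. destruct (Nat.lt_ge_cases i n) as [Hi|Hi].
    - destruct (HU i Hi) as [HS H3].
      destruct (T2_invariant_perturbation (U i) k eps HS H3 Heps) as [F' HF'].
      exists F'. intros _. exact HF'.
    - exists (U i). intros Hi'. lia. }
  exists (fun i => proj1_sig (constructive_indefinite_description _ (Hchoice i))).
  intros i. exact (proj2_sig (constructive_indefinite_description _ (Hchoice i))).
Qed.
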